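(* Let $$c=s^8-(2-2i)s^7-(6+2i)s^6+(10+2i)s^5+4is^4+(10-2i)s^3+(6-2i)s^2-(2+2i)s-1,$$ $$d=s^6-(3+3i)s^5+3is^4+(4-4i)s^3+3s^2+(3+3i)s+i,$$ and $$y=-\frac{(1+i)(s^2-1)(s^2+2is+1)(s^2-2is+1)^2\,c}{4s(s^2+i)(s^2-i)^2(s^2+(1+i)s-i)\,d},\qquad t=\frac{(s^2-1)^2(s^4+6s^2+1)^3}{32s^2(s^4+1)^3}.$$ Then $y(t)$ is a solution of $\mathrm{P}_{\mathrm{VI}}$ with parameters $(\theta_1,\theta_2,\theta_3,\theta_4)=(1/2,1/2,1/2,3/4)$.
   Context: $\mathrm{P}_{\mathrm{VI}}$ is the equation $$\frac{d^2y}{dt^2}=\frac12\Big(\frac1y+\frac1{y-1}+\frac1{y-t}\Big)\Big(\frac{dy}{dt}\Big)^2-\Big(\frac1t+\frac1{t-1}+\frac1{y-t}\Big)\frac{dy}{dt}+\frac{y(y-1)(y-t)}{t^2(t-1)^2}\Big(\alpha+\beta\frac{t}{y^2}+\gamma\frac{t-1}{(y-1)^2}+\delta\frac{t(t-1)}{(y-t)^2}\Big),$$ with $\alpha=(\theta_4-1)^2/2$, $\beta=-\theta_1^2/2$, $\gamma=\theta_3^2/2$, $\delta=(1-\theta_2^2)/2$. When $y,t$ are given as rational functions of a parameter on a curve, derivatives with respect to $t$ are computed via the chain rule. Here $i=\sqrt{-1}$. *)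

From Stdlib Require Import Reals.
From Coquelicot Require Import Coquelicot.
Open Scope C_scope.

Fixpoint cpow (z : C) (n : nat) : C :=
  match n with O => RtoC 1 | S m => z * cpow z m end.
Notation "z ^^ n" := (cpow z n) (at level 30, right associativity) : C_scope.

Definition cR (r : R) : C := RtoC r.

Definition cP (s : C) : C :=
  s^^8 - (cR 2 - cR 2 * Ci) * s^^7 - (cR 6 + cR 2 * Ci) * s^^6
  + (cR 10 + cR 2 * Ci) * s^^5 + cR 4 * Ci * s^^4 + (cR 10 - cR 2 * Ci) * s^^3
  + (cR 6 - cR 2 * Ci) * s^^2 - (cR 2 + cR 2 * Ci) * s - cR 1.

Definition dP (s : C) : C :=
  s^^6 - (cR 3 + cR 3 * Ci) * s^^5 + cR 3 * Ci * s^^4 + (cR 4 - cR 4 * Ci) * s^^3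
  + cR 3 * s^^2 + (cR 3 + cR 3 * Ci) * s + Ci.

Definition ynum (s : C) : C :=
  - ((cR 1 + Ci) * (s^^2 - cR 1) * (s^^2 + cR 2 * Ci * s + cR 1)
     * (s^^2 - cR 2 * Ci * s + cR 1)^^2 * cP s).
Definition yden (s : C) : C :=
  cR 4 * s * (s^^2 + Ci) * (s^^2 - Ci)^^2 * (s^^2 + (cR 1 + Ci) * s - Ci) * dP s.
Definition yfun (s : C) : C := ynum s / yden s.

Definition tnum (s : C) : C := (s^^2 - cR 1)^^2 * (s^^4 + cR 6 * s^^2 + cR 1)^^3.
Definition tden (s : C) : C := cR 32 * s^^2 * (s^^4 + cR 1)^^3.
Definition tfun (s : C) : C := tnum s / tden s.

Definition PVI_alpha (th4 : C) : C := (th4 - cR 1)^^2 / cR 2.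
Definition PVI_beta  (th1 : C) : C := - (th1^^2 / cR 2).
Definition PVI_gamma (th3 : C) : C := th3^^2 / cR 2.
Definition PVI_delta (th2 : C) : C := (cR 1 - th2^^2) / cR 2.

(* the PVI equation at a point: y, its first and second t-derivatives y1, y2, and t *)
Definition PVI_eq (th1 th2 th3 th4 : C) (t y y1 y2 : C) : Prop :=
  y2 = cR (1/2) * (/ y + / (y - cR 1) + / (y - t)) * y1^^2
       - (/ t + / (t - cR 1) + / (y - t)) * y1
       + y * (y - cR 1) * (y - t) / (t^^2 * (t - cR 1)^^2)
         * (PVI_alpha th4 + PVI_beta th1 * t / y^^2
            + PVI_gamma th3 * (t - cR 1) / (y - cR 1)^^2
            + PVI_delta th2 * t * (t - cR 1) / (y - t)^^2).

(* Write y = N/D and t = P/Q with N, D, P, Q polynomials in s over Z[i].  By the chain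
   rule dy/dt and d^2y/dt^2 are again rational in s, so at a regular point PVI amounts to
   the vanishing of one polynomial: the numerator of the residual "y'' - RHS" once all
   denominators are cleared.  That identity is decided by computing in Z[i][s].  The
   analytic part only identifies the given derivatives Y1, T1, W with the formal ones,
   through the product rule and the uniqueness of derivatives. *)

From Stdlib Require Import Reals ZArith List Lra.
From Coquelicot Require Import Coquelicot.
Import ListNotations.
Open Scope C_scope.

Definition gauss := (Z * Z)%type.

Definition gauss_to_C (x : gauss) : C := (IZR (fst x), IZR (snd x)).
Definition gauss_add (x y : gauss) : gauss := (fst x + fst y, snd x + snd y)%Z.
Definition gauss_mul (x y : gauss) : gauss :=
  (fst x * fst y - snd x * snd y, fst x * snd y + snd x * fst y)%Z.
Definition gauss_opp (x : gauss) : gauss := (- fst x, - snd x)%Z.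

Lemma gauss_to_C_add x y : gauss_to_C (gauss_add x y) = gauss_to_C x + gauss_to_C y.
Proof. destruct x, y; unfold gauss_to_C, gauss_add; simpl. now rewrite !plus_IZR. Qed.

Lemma gauss_to_C_mul x y : gauss_to_C (gauss_mul x y) = gauss_to_C x * gauss_to_C y.
Proof.
  destruct x, y; unfold gauss_to_C, gauss_mul, Cmult; simpl.
  now rewrite minus_IZR, plus_IZR, !mult_IZR.
Qed.

Lemma gauss_to_C_opp x : gauss_to_C (gauss_opp x) = - gauss_to_C x.
Proof. destruct x; unfold gauss_to_C, gauss_opp, Copp; simpl. now rewrite !opp_IZR. Qed.

Lemma gauss_to_C_of_Z a : gauss_to_C (a, 0%Z) = cR (IZR a).
Proof. reflexivity. Qed.

(* Polynomials with coefficients in Z[i], as coefficient lists, constant term first. *)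
Definition gpoly := list gauss.

Fixpoint gpoly_add (p q : gpoly) : gpoly :=
  match p, q with
  | [], _ => q
  | _, [] => p
  | c :: p', e :: q' => gauss_add c e :: gpoly_add p' q'
  end.
Definition gpoly_scale (c : gauss) (q : gpoly) : gpoly := map (gauss_mul c) q.
Fixpoint gpoly_mul (p q : gpoly) : gpoly :=
  match p with
  | [] => []
  | c :: p' => gpoly_add (gpoly_scale c q) ((0, 0)%Z :: gpoly_mul p' q)
  end.
Definition gpoly_opp (p : gpoly) : gpoly := map gauss_opp p.
Definition gpoly_sub (p q : gpoly) : gpoly := gpoly_add p (gpoly_opp q).
Fixpoint gpoly_pow (p : gpoly) (n : nat) : gpoly :=
  match n with O => [(1, 0)%Z] | S m => gpoly_mul p (gpoly_pow p m) end.
(* (c + X p)' = p + X p' *)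
Fixpoint gpoly_deriv (p : gpoly) : gpoly :=
  match p with [] => [] | _ :: p' => gpoly_add p' ((0, 0)%Z :: gpoly_deriv p') end.
Definition gpoly_X : gpoly := [(0, 0); (1, 0)]%Z.
Definition gpoly_of_Z (a : Z) : gpoly := [(a, 0%Z)].
Definition gpoly_i : gpoly := [(0, 1)%Z].
Definition gpoly_eqb0 (p : gpoly) : bool :=
  forallb (fun c => andb (Z.eqb (fst c) 0) (Z.eqb (snd c) 0)) p.

Declare Scope gpoly_scope.
Delimit Scope gpoly_scope with gp.
Infix "+" := gpoly_add : gpoly_scope.
Infix "-" := gpoly_sub : gpoly_scope.
Infix "*" := gpoly_mul : gpoly_scope.
Infix "^" := gpoly_pow : gpoly_scope.
Notation "- p" := (gpoly_opp p) : gpoly_scope.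

Fixpoint gpoly_eval (p : gpoly) (z : C) : C :=
  match p with [] => 0 | c :: p' => gauss_to_C c + z * gpoly_eval p' z end.

Lemma gpoly_eval_add p q z : gpoly_eval (p + q)%gp z = gpoly_eval p z + gpoly_eval q z.
Proof.
  revert q; induction p as [|c p IH]; intros [|e q]; simpl; try ring.
  rewrite gauss_to_C_add, IH. ring.
Qed.

Lemma gpoly_eval_scale c q z : gpoly_eval (gpoly_scale c q) z = gauss_to_C c * gpoly_eval q z.
Proof. induction q as [|e q IH]; simpl; [ring|]. rewrite gauss_to_C_mul, IH. ring. Qed.

Lemma gpoly_eval_mul p q z : gpoly_eval (p * q)%gp z = gpoly_eval p z * gpoly_eval q z.
Proof.
  induction p as [|c p IH]; simpl; [ring|].
  rewrite gpoly_eval_add, gpoly_eval_scale. simpl. rewrite IH, gauss_to_C_of_Z. unfold cR. ring.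
Qed.

Lemma gpoly_eval_opp p z : gpoly_eval (- p)%gp z = - gpoly_eval p z.
Proof. induction p as [|c p IH]; simpl; [ring|]. rewrite gauss_to_C_opp, IH. ring. Qed.

Lemma gpoly_eval_sub p q z : gpoly_eval (p - q)%gp z = gpoly_eval p z - gpoly_eval q z.
Proof. unfold gpoly_sub. rewrite gpoly_eval_add, gpoly_eval_opp. ring. Qed.

Lemma gpoly_eval_pow p n z : gpoly_eval (p ^ n)%gp z = gpoly_eval p z ^^ n.
Proof.
  induction n as [|n IH]; simpl; [rewrite gauss_to_C_of_Z; unfold cR; ring|].
  now rewrite gpoly_eval_mul, IH.
Qed.

Lemma gpoly_eval_X z : gpoly_eval gpoly_X z = z.
Proof. simpl. rewrite !gauss_to_C_of_Z. unfold cR. ring. Qed.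

Lemma gpoly_eval_of_Z a z : gpoly_eval (gpoly_of_Z a) z = cR (IZR a).
Proof. simpl. rewrite gauss_to_C_of_Z. ring. Qed.

Lemma gpoly_eval_i z : gpoly_eval gpoly_i z = Ci.
Proof. simpl. change (gauss_to_C (0, 1)%Z) with Ci. ring. Qed.

Lemma gpoly_eval_eqb0 p z : gpoly_eqb0 p = true -> gpoly_eval p z = 0.
Proof.
  induction p as [|[a b] p IH]; simpl; [easy|].
  intros [[Ha%Z.eqb_eq Hb%Z.eqb_eq]%andb_prop Hp]%andb_prop; subst.
  rewrite IH by exact Hp. rewrite gauss_to_C_of_Z. unfold cR. ring.
Qed.

#[local] Hint Rewrite gpoly_eval_add gpoly_eval_mul gpoly_eval_sub gpoly_eval_opp gpoly_eval_pow
  gpoly_eval_X gpoly_eval_of_Z gpoly_eval_i : gpoly_eval.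

(* C carries two normed-module structures, [AbsRing_NormedModule C_AbsRing] (used by the
   generic differentiation rules) and [C_NormedModule]; derivatives agree for both. *)
Lemma is_derive_C_NormedModule (f : C -> C) z l :
  @is_derive C_AbsRing (AbsRing_NormedModule C_AbsRing) f z l ->
  @is_derive C_AbsRing C_NormedModule f z l.
Proof. intros [[Hadd Hscal Hbnd] Hdom]; split; [split|]; auto. Qed.

Lemma is_derive_AbsRing_NormedModule (f : C -> C) z l :
  @is_derive C_AbsRing C_NormedModule f z l ->
  @is_derive C_AbsRing (AbsRing_NormedModule C_AbsRing) f z l.
Proof. intros [[Hadd Hscal Hbnd] Hdom]; split; [split|]; auto. Qed.

Lemma is_derive_gpoly_eval p z :
  @is_derive C_AbsRing C_NormedModule (gpoly_eval p) z (gpoly_eval (gpoly_deriv p) z).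
Proof.
  apply is_derive_C_NormedModule.
  induction p as [|c p IH]; simpl.
  - exact (is_derive_const (K := C_AbsRing) (V := AbsRing_NormedModule C_AbsRing) (0 : C) z).
  - evar (l : C); replace (gpoly_eval (gpoly_add p _) z) with l; subst l.
    + apply (is_derive_plus (K := C_AbsRing) (V := AbsRing_NormedModule C_AbsRing)
               (fun _ => gauss_to_C c)).
      * apply is_derive_const.
      * apply (is_derive_mult (K := C_AbsRing) (fun u => u));
          [apply is_derive_id | exact IH | exact Cmult_comm].
    + rewrite gpoly_eval_add. simpl. rewrite gauss_to_C_of_Z. unfold cR.
      rewrite plus_zero_l. change (plus ?a ?b) with (Cplus a b).
      rewrite mult_one_l. change (mult ?a ?b) with (Cmult a b). ring.
Qed.

Lemma locally_neq {K : AbsRing} {V : NormedModule K} (x z : V) :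
  x <> z -> locally x (fun y => y <> z).
Proof.
  intros Hxz. apply locally_le_locally_norm.
  exists (mkposreal _ (norm_minus_gt_0 z x (not_eq_sym Hxz))).
  intros y Hy ->. unfold ball_norm in Hy. simpl in Hy. lra.
Qed.

Lemma gpoly_eval_neq_0_near p s :
  gpoly_eval p s <> 0 -> locally s (fun u => gpoly_eval p u <> 0).
Proof.
  intros Hs. apply locally_C.
  exact (ex_derive_continuous (V := C_NormedModule) (gpoly_eval p) s
           (ex_intro _ _ (is_derive_gpoly_eval p s)) _ (locally_neq _ _ Hs)).
Qed.

(* Identifies the derivative of [f = N / D] from the product rule for [f * D = N],
   without assuming that [/ D] is known to be differentiable. *)
Lemma is_derive_quotient_unique (f N D : C -> C) (z Y dN dD : C) :
  @is_derive C_AbsRing C_NormedModule f z Y ->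
  @is_derive C_AbsRing C_NormedModule N z dN ->
  @is_derive C_AbsRing C_NormedModule D z dD ->
  locally z (fun u => f u * D u = N u) -> D z <> 0 ->
  Y = (dN * D z - N z * dD) / (D z * D z).
Proof.
  intros Hf HN HD Hloc HDz.
  pose proof (locally_singleton _ _ Hloc) as Hfz; simpl in Hfz.
  pose proof (is_derive_mult (K := C_AbsRing) f D z Y dD
    (is_derive_AbsRing_NormedModule _ _ _ Hf) (is_derive_AbsRing_NormedModule _ _ _ HD)
    Cmult_comm) as Hprod.
  apply (is_derive_ext_loc (K := C_AbsRing) (V := AbsRing_NormedModule C_AbsRing) _ N)
    in Hprod; [|exact (proj1 (locally_C _ _) Hloc)].
  apply is_derive_C_NormedModule, is_C_derive_unique in Hprod.
  apply is_C_derive_unique in HN.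
  rewrite HN in Hprod. change (plus ?a ?b) with (Cplus a b) in Hprod.
  change (mult ?a ?b) with (Cmult a b) in Hprod.
  rewrite Hprod, <- Hfz. field. exact HDz.
Qed.

Definition gpoly_quot_num (A B : gpoly) : gpoly :=
  (gpoly_deriv A * B - A * gpoly_deriv B)%gp.

Lemma is_derive_gpoly_ratio_unique (f : C -> C) (A B : gpoly) (s Y : C) :
  gpoly_eval B s <> 0 ->
  locally s (fun u => f u = gpoly_eval A u / gpoly_eval B u) ->
  @is_derive C_AbsRing C_NormedModule f s Y ->
  Y = gpoly_eval (gpoly_quot_num A B) s / gpoly_eval (B * B)%gp s.
Proof.
  intros HBs Hf HY.
  unfold gpoly_quot_num. autorewrite with gpoly_eval.
  apply (is_derive_quotient_unique f (gpoly_eval A) (gpoly_eval B));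
    [exact HY | apply is_derive_gpoly_eval | apply is_derive_gpoly_eval | | exact HBs].
  generalize (filter_and _ _ (gpoly_eval_neq_0_near B s HBs) Hf).
  apply filter_imp. intros u [HBu ->]. field. exact HBu.
Qed.

Lemma gpoly_ratio_derive_near (f F1 : C -> C) (A B : gpoly) (s : C) :
  (forall u, f u = gpoly_eval A u / gpoly_eval B u) ->
  gpoly_eval B s <> 0 ->
  locally s (fun u => @is_derive C_AbsRing C_NormedModule f u (F1 u)) ->
  locally s (fun u => F1 u = gpoly_eval (gpoly_quot_num A B) u / gpoly_eval (B * B)%gp u).
Proof.
  intros Hf HBs HF1.
  generalize (filter_and _ _ (gpoly_eval_neq_0_near B s HBs) HF1).
  apply filter_imp. intros u [HBu HF1u].
  apply is_derive_gpoly_ratio_unique with f; [exact HBu | | exact HF1u].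
  apply filter_forall. exact Hf.
Qed.

Section PVIResidual.

Variables (T : Type) (add sub mul : T -> T -> T) (of_Z : Z -> T).

Local Infix "+" := add.
Local Infix "-" := sub.
Local Infix "*" := mul.
Local Notation "[ k ]" := (of_Z k%Z).

(* For y = n/d, t = p/q, dt/ds = b0/q^2, dy/dt = a/b and d^2y/dt^2 = (a/b)' / (b0/q^2),
   with a1, b1 standing for a', b', the PVI residual y'' - RHS at thetas
   (1/2,1/2,1/2,3/4) is this expression divided by 64 b^2 b0 n (n-d) (nq-pd) p^2 (p-q)^2 d^3 q.
   It is stated over any ring so that it can be both evaluated in C and computed in Z[i][s]. *)
Definition pvi_residual_num (n d p q a b a1 b1 b0 : T) : T :=
  [64] * (a1 * b - a * b1) * (q * q * q) * n * (n - d) * (n * q - p * d) * (p * p)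
    * ((p - q) * (p - q)) * (d * d * d)
  - [32] * (a * a) * ((n - d) * (n * q - p * d) + n * (n * q - p * d) + q * n * (n - d))
    * b0 * (p * p) * ((p - q) * (p - q)) * (d * d * d * d) * q
  + [64] * a * ((p - q) * (n * q - p * d) + p * (n * q - p * d) + d * p * (p - q))
    * b * b0 * n * (n - d) * p * (p - q) * (d * d * d) * (q * q)
  - (b * b) * b0 * (q * q * q)
    * ([2] * q * (n * n) * ((n - d) * (n - d)) * ((n * q - p * d) * (n * q - p * d))
       - [8] * p * (d * d) * ((n - d) * (n - d)) * ((n * q - p * d) * (n * q - p * d))
       + [8] * (p - q) * (d * d) * (n * n) * ((n * q - p * d) * (n * q - p * d))
       + [24] * q * p * (p - q) * (d * d) * (n * n) * ((n - d) * (n - d))).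

End PVIResidual.

Definition pvi_residual_num_C : C -> C -> C -> C -> C -> C -> C -> C -> C -> C :=
  pvi_residual_num C Cplus Cminus Cmult (fun k => cR (IZR k)).
Definition pvi_residual_num_gpoly :
  gpoly -> gpoly -> gpoly -> gpoly -> gpoly -> gpoly -> gpoly -> gpoly -> gpoly -> gpoly :=
  pvi_residual_num gpoly gpoly_add gpoly_sub gpoly_mul gpoly_of_Z.

Lemma gpoly_eval_pvi_residual_num n d p q a b a1 b1 b0 z :
  gpoly_eval (pvi_residual_num_gpoly n d p q a b a1 b1 b0) z =
  pvi_residual_num_C (gpoly_eval n z) (gpoly_eval d z) (gpoly_eval p z) (gpoly_eval q z)
    (gpoly_eval a z) (gpoly_eval b z) (gpoly_eval a1 z) (gpoly_eval b1 z) (gpoly_eval b0 z).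
Proof.
  unfold pvi_residual_num_gpoly, pvi_residual_num_C, pvi_residual_num.
  now autorewrite with gpoly_eval.
Qed.

Lemma PVI_eq_of_residual_num (n d p q a b a1 b1 b0 : C) :
  d <> 0 -> q <> 0 -> b <> 0 -> b0 <> 0 ->
  n / d <> cR 0 -> n / d <> cR 1 -> n / d <> p / q -> p / q <> cR 0 -> p / q <> cR 1 ->
  pvi_residual_num_C n d p q a b a1 b1 b0 = 0 ->
  PVI_eq (cR (1/2)) (cR (1/2)) (cR (1/2)) (cR (3/4))
    (p / q) (n / d) (a / b) ((a1 * b - a * b1) / (b * b) / (b0 / (q * q))).
Proof.
  intros Hd Hq Hb Hb0 Hy0 Hy1 Hyt Ht0 Ht1 Hres.
  assert (Hn : n <> 0) by (intros ->; apply Hy0; unfold cR; field; exact Hd).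
  assert (Hp : p <> 0) by (intros ->; apply Ht0; unfold cR; field; exact Hq).
  assert (Hnd : n - d <> 0)
    by (intros E; apply Hy1; apply Ceq_minus in E; rewrite E; unfold cR; field; exact Hd).
  assert (Hpq : p - q <> 0)
    by (intros E; apply Ht1; apply Ceq_minus in E; rewrite E; unfold cR; field; exact Hq).
  assert (Hnqpd : n * q - p * d <> 0).
  { intros E. apply Hyt, Ceq_minus.
    replace (n / d - p / q) with ((n * q - p * d) / (d * q)) by (field; auto).
    rewrite E. field. auto. }
  unfold PVI_eq, PVI_alpha, PVI_beta, PVI_gamma, PVI_delta, cR. simpl cpow.
  rewrite !RtoC_div by lra.
  assert (H2 : RtoC 2 <> 0) by (intro H; injection H; lra).
  assert (H4 : RtoC 4 <> 0) by (intro H; injection H; lra).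
  apply Ceq_minus.
  transitivity (pvi_residual_num_C n d p q a b a1 b1 b0 /
     (RtoC 64 * (b * b) * b0 * n * (n - d) * (n * q - p * d) * (p * p) * ((p - q) * (p - q))
      * (d * d * d) * q)).
  - unfold pvi_residual_num_C, pvi_residual_num, cR. field. repeat split; assumption.
  - rewrite Hres. field. repeat split; assumption.
Qed.

(* For y = N/D and t = P/Q: dy/dt = y'(s) / t'(s) = dydt_num / dydt_den. *)
Definition dydt_num (N D Q : gpoly) : gpoly := (gpoly_quot_num N D * (Q * Q))%gp.
Definition dydt_den (D P Q : gpoly) : gpoly := (gpoly_quot_num P Q * (D * D))%gp.

Lemma gpoly_eval_dydt_den_neq_0 D P Q s :
  gpoly_eval D s <> 0 -> gpoly_eval (gpoly_quot_num P Q) s <> 0 ->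
  gpoly_eval (dydt_den D P Q) s <> 0.
Proof.
  intros HD HPQ. unfold dydt_den. autorewrite with gpoly_eval.
  repeat apply Cmult_neq_0; assumption.
Qed.

Lemma dydt_near (N D P Q : gpoly) (Y1 T1 : C -> C) (s : C) :
  gpoly_eval D s <> 0 -> gpoly_eval Q s <> 0 -> gpoly_eval (gpoly_quot_num P Q) s <> 0 ->
  locally s (fun u => Y1 u = gpoly_eval (gpoly_quot_num N D) u / gpoly_eval (D * D)%gp u) ->
  locally s (fun u => T1 u = gpoly_eval (gpoly_quot_num P Q) u / gpoly_eval (Q * Q)%gp u) ->
  locally s (fun u => Y1 u / T1 u =
                      gpoly_eval (dydt_num N D Q) u / gpoly_eval (dydt_den D P Q) u).
Proof.
  intros HD HQ HPQ HY HT.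
  generalize (filter_and _ _ (gpoly_eval_neq_0_near _ _ HD)
               (filter_and _ _ (gpoly_eval_neq_0_near _ _ HQ)
                 (filter_and _ _ (gpoly_eval_neq_0_near _ _ HPQ) (filter_and _ _ HY HT)))).
  apply filter_imp. intros u [HDu [HQu [HPQu [-> ->]]]].
  unfold dydt_num, dydt_den. autorewrite with gpoly_eval in *.
  field. auto.
Qed.

Lemma PVI_eq_of_gpoly_residual (N D P Q : gpoly) (s : C) :
  gpoly_eqb0 (pvi_residual_num_gpoly N D P Q (dydt_num N D Q) (dydt_den D P Q)
    (gpoly_deriv (dydt_num N D Q)) (gpoly_deriv (dydt_den D P Q)) (gpoly_quot_num P Q)) = true ->
  gpoly_eval D s <> 0 -> gpoly_eval Q s <> 0 -> gpoly_eval (gpoly_quot_num P Q) s <> 0 ->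
  let y := gpoly_eval N s / gpoly_eval D s in
  let t := gpoly_eval P s / gpoly_eval Q s in
  y <> cR 0 -> y <> cR 1 -> y <> t -> t <> cR 0 -> t <> cR 1 ->
  PVI_eq (cR (1/2)) (cR (1/2)) (cR (1/2)) (cR (3/4)) t y
    (gpoly_eval (dydt_num N D Q) s / gpoly_eval (dydt_den D P Q) s)
    (gpoly_eval (gpoly_quot_num (dydt_num N D Q) (dydt_den D P Q)) s
       / gpoly_eval (dydt_den D P Q * dydt_den D P Q)%gp s
     / (gpoly_eval (gpoly_quot_num P Q) s / gpoly_eval (Q * Q)%gp s)).
Proof.
  intros Hres HD HQ HPQ y t Hy0 Hy1 Hyt Ht0 Ht1. subst y t.
  pose proof (gpoly_eval_dydt_den_neq_0 D P Q s HD HPQ) as Hdydt.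
  apply (gpoly_eval_eqb0 _ s) in Hres. rewrite gpoly_eval_pvi_residual_num in Hres.
  unfold gpoly_quot_num at 1. autorewrite with gpoly_eval.
  apply PVI_eq_of_residual_num; assumption.
Qed.

Local Notation X := gpoly_X.
Local Notation i := gpoly_i.
Local Notation "# k" := (gpoly_of_Z k%Z) (at level 0, k at level 0).

Definition cP_gpoly : gpoly :=
  (X^8 - (#2 - #2 * i) * X^7 - (#6 + #2 * i) * X^6 + (#10 + #2 * i) * X^5 + #4 * i * X^4
   + (#10 - #2 * i) * X^3 + (#6 - #2 * i) * X^2 - (#2 + #2 * i) * X - #1)%gp.
Definition dP_gpoly : gpoly :=
  (X^6 - (#3 + #3 * i) * X^5 + #3 * i * X^4 + (#4 - #4 * i) * X^3 + #3 * X^2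
   + (#3 + #3 * i) * X + i)%gp.
Definition ynum_gpoly : gpoly :=
  (- ((#1 + i) * (X^2 - #1) * (X^2 + #2 * i * X + #1) * (X^2 - #2 * i * X + #1)^2
      * cP_gpoly))%gp.
Definition yden_gpoly : gpoly :=
  (#4 * X * (X^2 + i) * (X^2 - i)^2 * (X^2 + (#1 + i) * X - i) * dP_gpoly)%gp.
Definition tnum_gpoly : gpoly := ((X^2 - #1)^2 * (X^4 + #6 * X^2 + #1)^3)%gp.
Definition tden_gpoly : gpoly := (#32 * X^2 * (X^4 + #1)^3)%gp.

Lemma ynum_eval z : ynum z = gpoly_eval ynum_gpoly z.
Proof.
  unfold ynum, cP, ynum_gpoly, cP_gpoly. autorewrite with gpoly_eval. unfold cR. ring.
Qed.

Lemma yden_eval z : yden z = gpoly_eval yden_gpoly z.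
Proof.
  unfold yden, dP, yden_gpoly, dP_gpoly. autorewrite with gpoly_eval. unfold cR. ring.
Qed.

Lemma tnum_eval z : tnum z = gpoly_eval tnum_gpoly z.
Proof. unfold tnum, tnum_gpoly. autorewrite with gpoly_eval. unfold cR. ring. Qed.

Lemma tden_eval z : tden z = gpoly_eval tden_gpoly z.
Proof. unfold tden, tden_gpoly. autorewrite with gpoly_eval. unfold cR. ring. Qed.

Lemma yfun_eval z : yfun z = gpoly_eval ynum_gpoly z / gpoly_eval yden_gpoly z.
Proof. unfold yfun. now rewrite ynum_eval, yden_eval. Qed.

Lemma tfun_eval z : tfun z = gpoly_eval tnum_gpoly z / gpoly_eval tden_gpoly z.
Proof. unfold tfun. now rewrite tnum_eval, tden_eval. Qed.

Lemma pvi_residual_num_vanishes :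
  gpoly_eqb0 (pvi_residual_num_gpoly ynum_gpoly yden_gpoly tnum_gpoly tden_gpoly
    (dydt_num ynum_gpoly yden_gpoly tden_gpoly) (dydt_den yden_gpoly tnum_gpoly tden_gpoly)
    (gpoly_deriv (dydt_num ynum_gpoly yden_gpoly tden_gpoly))
    (gpoly_deriv (dydt_den yden_gpoly tnum_gpoly tden_gpoly))
    (gpoly_quot_num tnum_gpoly tden_gpoly)) = true.
Proof. vm_compute. reflexivity. Qed.

Theorem mainTheorem12 :
  forall (s : C) (Y1 T1 : C -> C) (W : C),
    yden s <> cR 0 -> tden s <> cR 0 ->
    locally s (fun u => @is_derive C_AbsRing C_NormedModule yfun u (Y1 u)) ->
    locally s (fun u => @is_derive C_AbsRing C_NormedModule tfun u (T1 u)) ->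
    @is_derive C_AbsRing C_NormedModule (fun u => Y1 u / T1 u) s W ->
    T1 s <> cR 0 ->
    yfun s <> cR 0 -> yfun s <> cR 1 -> yfun s <> tfun s ->
    tfun s <> cR 0 -> tfun s <> cR 1 ->
    PVI_eq (cR (1/2)) (cR (1/2)) (cR (1/2)) (cR (3/4))
           (tfun s) (yfun s) (Y1 s / T1 s) (W / T1 s).
Proof.
  intros s Y1 T1 W HyD HtD HY HT HW HT1 Hy0 Hy1 Hyt Ht0 Ht1.
  rewrite yden_eval in HyD. rewrite tden_eval in HtD.
  pose proof (gpoly_ratio_derive_near yfun Y1 _ _ s yfun_eval HyD HY) as LY.
  pose proof (gpoly_ratio_derive_near tfun T1 _ _ s tfun_eval HtD HT) as LT.
  pose proof (locally_singleton _ _ LT) as HT1s. cbv beta in HT1s.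
  assert (Hdt : gpoly_eval (gpoly_quot_num tnum_gpoly tden_gpoly) s <> 0).
  { intros E. apply HT1. rewrite HT1s, E. unfold cR.
    autorewrite with gpoly_eval. field. exact HtD. }
  pose proof (dydt_near _ _ _ _ Y1 T1 s HyD HtD Hdt LY LT) as Hdydt.
  rewrite (is_derive_gpoly_ratio_unique _ _ _ s W
             (gpoly_eval_dydt_den_neq_0 _ _ _ s HyD Hdt) Hdydt HW).
  rewrite (locally_singleton _ _ Hdydt), HT1s.
  rewrite !yfun_eval, !tfun_eval in *.
  exact (PVI_eq_of_gpoly_residual _ _ _ _ s pvi_residual_num_vanishes HyD HtD Hdt
           Hy0 Hy1 Hyt Ht0 Ht1).
Qed.
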